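(* Let $k$ be a field of characteristic zero, $X$ a smooth $k$-variety of dimension $d$, $f$ a non-constant regular function on $X$, and $n\ge1$. Then $\mathcal J_n(f)\subseteq\mathcal J_1(f)^{\binom{d-2+n}{d-1}}$. In particular, $\mathcal J_n(f)\subseteq\mathcal J_1(f)^3$ if either (i) $d\ge3$ and $n\ge2$, or (ii) $d=2$ and $n\ge3$.
   Context: $\Omega^{(n)}_f=\mathcal I/\mathcal I^{n+1}$ where $\mathcal I$ is the ideal of the diagonal in $X\times_{\mathbb A^1_k}X$ (fiber product via $f$). $\mathcal J_n(f)=\mathbf{Fitt}_r(\Omega^{(n)}_f)$, $r=\binom{d-1+n}{d-1}-1$; in local coordinates $x_1,\dots,x_d$ it is generated by the maximal minors of the matrix $\mathrm{Jac}_n(f)$ with rows $\beta\in\mathbb N^d$, $0\le|\beta|\le n-1$, columns $\alpha$, $1\le|\alpha|\le n$, and entries $\partial^{\alpha-\beta}f/(\alpha-\beta)!$ if $\alpha\ge\beta$ componentwise and $\alpha\ne\beta$, $0$ otherwise. In particular $\mathcal J_1(f)$ is the ideal generated by $\partial f/\partial x_1,\dots,\partial f/\partial x_d$. *)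

From HB Require Import structures.
From mathcomp Require Import all_boot all_order all_algebra.
Set Implicit Arguments. Unset Strict Implicit. Unset Printing Implicit Defensive.
Import Order.TTheory GRing.Theory Num.Theory.
Local Open Scope ring_scope.

Section HigherJacobian.
Variables (k : fieldType) (A : comAlgType k) (d n : nat).
(* D i plays the role of the coordinate derivation d/dx_i *)
Variable D : 'I_d -> A -> A.

(* multi-indices with entries <= n (enough: every |alpha| <= n) *)
Definition mindex := {ffun 'I_d -> 'I_n.+1}.
Definition mdeg (a : mindex) : nat := (\sum_(i < d) (a i : nat))%N.

Definition dpow (g : 'I_d -> nat) (f : A) : A :=
  foldr (fun i h => iter (g i) (D i) h) f (enum 'I_d).
Definition mfact (g : 'I_d -> nat) : nat := (\prod_(i < d) (g i)`!)%N.

Definition rowset : {set mindex} := [set b | (mdeg b <= n.-1)%N].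
Definition colset : {set mindex} := [set a | (1 <= mdeg a <= n)%N].

Definition jac_entry (f : A) (b a : mindex) : A :=
  if [forall i, (b i <= a i)%N] && (a != b) then
    ((mfact (fun i => (a i - b i)%N))%:R : k)^-1 *:
      dpow (fun i => (a i - b i)%N) f
  else 0.

Definition Jac_n (f : A) : 'M[A]_(#|rowset|, #|colset|) :=
  \matrix_(i, j) jac_entry f (enum_val i) (enum_val j).

Definition max_minor (f : A) (s : 'I_#|rowset| -> 'I_#|colset|) : A :=
  \det (\matrix_(i, j) Jac_n f i (s j)).

Definition in_Jn (f x : A) : Prop :=
  exists c : {ffun 'I_#|rowset| -> 'I_#|colset|} -> A,
    x = \sum_(s : {ffun 'I_#|rowset| -> 'I_#|colset|} | injectiveb s)
          c s * max_minor f s.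
End HigherJacobian.

Definition in_J1pow (k : fieldType) (A : comAlgType k) (d : nat)
    (D : 'I_d -> A -> A) (N : nat) (f x : A) : Prop :=
  exists c : {ffun 'I_N -> 'I_d} -> A,
    x = \sum_(g : {ffun 'I_N -> 'I_d}) c g * \prod_(j < N) D (g j) f.

Definition is_k_derivation (k : fieldType) (A : comAlgType k) (D : A -> A) :=
  (forall (c : k) (x y : A), D (c *: x + y) = c *: D x + D y) /\
  (forall x y : A, D (x * y) = D x * y + x * D y).

From HB Require Import structures.
From mathcomp Require Import all_boot all_order all_algebra zify.
Set Implicit Arguments.
Unset Strict Implicit.
Unset Printing Implicit Defensive.
Import Order.TTheory GRing.Theory Num.Theory.
Local Open Scope ring_scope.

(* Expand every maximal minor of Jac_n(f) by the Leibniz formula. In a row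
   beta with |beta| = n - 1 the only nonzero entries sit in the columns
   alpha = beta + e_i (as |alpha| <= n), where the entry is df/dx_i. Hence each
   term of each minor takes one factor from J_1(f) in each of these rows, and
   there are C(n+d-2, d-1) of them: the monomials of degree n - 1 in d
   variables. Only the shape of Jac_n(f) matters: characteristic zero, the
   derivation axioms, the coordinates and the non-constancy of f are not
   needed. *)

Section PowersOfJ1.
Variables (k : fieldType) (A : comAlgType k) (d : nat) (D : 'I_d -> A -> A) (f : A).
Local Notation J N x := (in_J1pow D N f x).

Lemma in_J1pow_prod N (g : {ffun 'I_N -> 'I_d}) : J N (\prod_(j < N) D (g j) f).
Proof.
exists [ffun h => (h == g)%:R].
rewrite [RHS](bigD1 g) //= ffunE eqxx mul1r [X in _ + X]big1 ?addr0 //.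
by move=> h /negbTE hg; rewrite ffunE hg mul0r.
Qed.

Lemma in_J1pow0 N : J N 0.
Proof. by exists [ffun => 0]; rewrite big1 // => g _; rewrite ffunE mul0r. Qed.

Lemma in_J1powD N x y : J N x -> J N y -> J N (x + y).
Proof.
move=> [c ->] [c' ->]; exists [ffun g => c g + c' g].
by rewrite -big_split; apply: eq_bigr => g _; rewrite ffunE mulrDl.
Qed.

Lemma in_J1powMl N a x : J N x -> J N (a * x).
Proof.
move=> [c ->]; exists [ffun g => a * c g].
by rewrite big_distrr; apply: eq_bigr => g _; rewrite /= ffunE mulrA.
Qed.

Lemma in_J1powZ N (c : k) x : J N x -> J N (c *: x).
Proof. by rewrite -mulr_algl; apply: in_J1powMl. Qed.

Lemma in_J1pow_sum N (I : Type) (r : seq I) (P : pred I) (F : I -> A) :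
  (forall i, P i -> J N (F i)) -> J N (\sum_(i <- r | P i) F i).
Proof. by apply: (big_ind (fun x => J N x)); [apply: in_J1pow0 | apply: in_J1powD]. Qed.

Lemma in_J1powM M N x y : J M x -> J N y -> J (M + N) (x * y).
Proof.
move=> [c ->] [c' ->]; rewrite big_distrl /=; apply: in_J1pow_sum => g _.
rewrite big_distrr /=; apply: in_J1pow_sum => h _.
rewrite mulrACA; apply: in_J1powMl.
pose gh := [ffun j => match split j with inl i => g i | inr i => h i end].
have -> : \prod_(j < M) D (g j) f * \prod_(j < N) D (h j) f
    = \prod_(j < M + N) D (gh j) f.
  by rewrite big_split_ord; congr (_ * _); apply: eq_bigr => i _;
    rewrite ffunE ?(unsplitK (inl _ i)) ?(unsplitK (inr _ i)).
exact: in_J1pow_prod.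
Qed.

Lemma in_J1pow_mono M N x : (M <= N)%N -> J N x -> J M x.
Proof.
move=> /subnKC <- [c ->]; apply: in_J1pow_sum => g _.
rewrite big_split_ord mulrA mulrAC; apply: in_J1powMl.
have -> : \prod_(j < M) D (g (lshift (N - M) j)) f
    = \prod_(j < M) D ([ffun j => g (lshift (N - M) j)] j) f.
  by apply: eq_bigr => j _; rewrite ffunE.
exact: in_J1pow_prod.
Qed.

Lemma in_J1pow_1 : J 0 1.
Proof. by have := in_J1pow_prod (ffun0 (card_ord 0)); rewrite big_ord0. Qed.

Lemma in_J1pow_partial i : J 1 (D i f).
Proof. by have := in_J1pow_prod [ffun _ : 'I_1 => i]; rewrite big_ord1 ffunE. Qed.

Lemma in_J1pow_prod_card (I : finType) (P : {pred I}) (F : I -> A) :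
  (forall i, P i -> J 1 (F i)) -> J #|P| (\prod_i F i).
Proof.
move=> PF; rewrite (bigID P) /= mulrC; apply: in_J1powMl.
rewrite -big_enum cardE.
have : forall i, i \in enum P -> J 1 (F i) by move=> i; rewrite mem_enum; apply: PF.
elim: (enum P) => [|i r IHr] rF; first by rewrite big_nil; apply: in_J1pow_1.
rewrite big_cons; apply: (@in_J1powM 1); first by apply: rF; rewrite mem_head.
by apply: IHr => j jr; apply: rF; rewrite inE jr orbT.
Qed.
End PowersOfJ1.

Lemma binomial_le_card_mdeg d m n : (m <= n)%N ->
  ('C(d + m, d) <= #|[set b : mindex d.+1 n | mdeg b == m]|)%N.
Proof.
move=> le_mn; rewrite -card_ord_partitions.
pose widen (t : d.+1.-tuple 'I_m.+1) : mindex d.+1 n :=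
  [ffun i => widen_ord (le_mn : (m.+1 <= n.+1)%N) (tnth t i)].
rewrite -(@card_in_imset _ _ widen) => [|t1 t2 _ _ /ffunP eq_t].
  apply/subset_leq_card/subsetP => _ /imsetP[t + ->].
  rewrite !inE big_tuple => /eqP <-.
  by apply/eqP/eq_bigr => i _; rewrite ffunE.
apply: eq_from_tnth => i; apply: val_inj.
by have := congr1 val (eq_t i); rewrite !ffunE.
Qed.

Section TopRowCount.
Variables d n : nat.

Definition top_row : {pred 'I_#|rowset d n|} :=
  [pred i | mdeg (enum_val i) == n.-1].

Lemma card_top_row : #|top_row| = #|[set b : mindex d n | mdeg b == n.-1]|.
Proof.
have top_in_rowset b : mdeg b == n.-1 -> b \in rowset d n.
  by rewrite inE => /eqP ->.
rewrite -(card_imset _ (@enum_val_inj _ _)); apply: eq_card => b.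
apply/imsetP/idP => [[i top_i ->] | /[!inE] top_b]; first by rewrite inE.
have b_row := top_in_rowset b top_b.
by exists (enum_rank_in b_row b); rewrite ?inE /= enum_rankK_in.
Qed.

Lemma binomial_le_card_top_row :
  (1 <= d)%N -> (1 <= n)%N -> ('C(n + d - 2, d - 1) <= #|top_row|)%N.
Proof.
rewrite card_top_row; case: d => [//|d'] _; case: n => [//|n'] _.
by rewrite (_ : n'.+1 + d'.+1 - 2 = d' + n')%N ?subn1; [apply: binomial_le_card_mdeg | lia].
Qed.
End TopRowCount.
Arguments top_row : clear implicits.

Section TopRowsOfJacobian.
Variables (k : fieldType) (A : comAlgType k) (d n : nat) (D : 'I_d -> A -> A) (f : A).
Local Notation J N x := (in_J1pow D N f x).

Lemma dpow_delta (i0 : 'I_d) (g : 'I_d -> nat) :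
  (forall i, g i = (i == i0) :> nat) -> dpow D g f = D i0 f.
Proof.
move=> g_delta; rewrite /dpow.
have foldr_delta r : uniq r ->
    foldr (fun i h => iter (g i) (D i) h) f r = if i0 \in r then D i0 f else f.
  elim: r => [|i r IHr] //= /andP[ir /IHr ->]; rewrite inE g_delta.
  case: eqP => [<- | /eqP ne] /=; first by rewrite eqxx (negbTE ir).
  by rewrite eq_sym (negbTE ne).
by rewrite foldr_delta ?enum_uniq ?mem_enum.
Qed.

Lemma jac_entry_top_row (b a : mindex d n) :
  mdeg b = n.-1 -> (mdeg a <= n)%N -> J 1 (jac_entry D f b a).
Proof.
move=> deg_b deg_a; rewrite /jac_entry.
case: ifP => [/andP[/forallP le_ba neq_ab] | _]; last exact: in_J1pow0.
set g := fun i => (a i - b i)%N.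
have deg_g : (\sum_i g i = mdeg a - mdeg b)%N by rewrite sumnB.
have g_neq0 : (\sum_i g i != 0)%N.
  rewrite sum_nat_eq0; apply: contra neq_ab => /forallP g0.
  apply/eqP/ffunP => i; apply/val_inj/eqP; rewrite eqn_leq le_ba -subn_eq0 andbT.
  exact: g0.
have /eqP/sum_nat_eq1[i0 [_ g_i0 g_i]] : (\sum_i g i = 1)%N by lia.
rewrite (@dpow_delta i0) => [|i]; first exact/in_J1powZ/in_J1pow_partial.
by case: eqP => [-> | /eqP ne]; rewrite ?g_i0 ?g_i.
Qed.

Lemma in_Jn_top_row x : in_Jn n D f x -> J #|top_row d n| x.
Proof.
move=> [c ->]; apply: in_J1pow_sum => s _; apply: in_J1powMl.
rewrite /max_minor /determinant; apply: in_J1pow_sum => sigma _; apply: in_J1powMl.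
apply: in_J1pow_prod_card => i /eqP deg_i; rewrite !mxE.
apply: jac_entry_top_row => //.
by set j := s _; have := enum_valP j; rewrite inE => /andP[].
Qed.
End TopRowsOfJacobian.

Theorem proposition2p18
  (k : fieldType) (pchar0 : [pchar k] =i pred0)
  (A : comAlgType k) (d : nat) (d_gt0 : (1 <= d)%N)
  (D : 'I_d -> A -> A)
  (Dder : forall i, is_k_derivation (D i))
  (Dcomm : forall i j (y : A), D i (D j y) = D j (D i y))
  (coords : exists x : 'I_d -> A,
      forall i j, D i (x j) = (if i == j then 1 else 0))
  (f : A) (f_nonconst : forall c : k, f != c%:A)
  (n : nat) (n_gt0 : (1 <= n)%N) :
  (forall x, in_Jn n D f x -> in_J1pow D 'C(n + d - 2, d - 1) f x) /\
  (((3 <= d)%N && (2 <= n)%N) || ((d == 2%N) && (3 <= n)%N) ->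
     forall x, in_Jn n D f x -> in_J1pow D 3 f x).
Proof.
have Jn_sub x : in_Jn n D f x -> in_J1pow D 'C(n + d - 2, d - 1) f x.
  by move/in_Jn_top_row; apply/in_J1pow_mono/binomial_le_card_top_row.
split=> // d_n_large x /Jn_sub; apply: in_J1pow_mono.
case/orP: d_n_large => /andP[le3d le_n]; last by rewrite (eqP le3d) subn1 bin1; lia.
have le_d_bin : ('C(d, d - 1) <= 'C(n + d - 2, d - 1))%N by apply: leq_bin2l; lia.
by rewrite bin_sub ?bin1 in le_d_bin; [apply: leq_trans le_d_bin | lia].
Qed.
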